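(* For every $n\ge 2$, an allocation that is both TEF1 and Pareto-optimal need not exist, for goods or for chores, even when there are only two types of items. That is, for each $n\ge2$ there is an instance with $n$ agents, all items goods, two item types, and no TEF1 and PO allocation; and likewise for chores.
   Context: Items arrive one per round in a fixed order $o_1,\dots,o_m$. Agents $N=[n]$ have additive valuations; goods have $v_i(o)\ge0$, chores $v_i(o)\le0$. ''Two types of items'' means the items can be partitioned into $S_1,S_2$ such that each agent values all items in the same set equally. An allocation $\mathcal{A}=(A_1,\dots,A_n)$ partitions the items; $\mathcal{A}^t$ is its restriction to $o_1,\dots,o_t$. An allocation $(B_i)$ is EF1 if for all $i,j$ there is a good $g\in B_j$ with $v_i(B_i)\ge v_i(B_j\setminus\{g\})$ (goods), resp. a chore $c\in B_i$ with $v_i(B_i\setminus\{c\})\ge v_i(B_j)$ (chores), considered satisfied if $v_i(B_i)\ge v_i(B_j)$. $\mathcal{A}$ is TEF1 if $\mathcal{A}^t$ is EF1 for every $t$. $\mathcal{A}$ is Pareto-optimal (PO) if no allocation $\mathcal{A}'$ has $v_i(A'_i)\ge v_i(A_i)$ for all $i$ with strict inequality for some $i$. *)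

From mathcomp Require Import all_boot all_order all_algebra.
Set Implicit Arguments. Unset Strict Implicit. Unset Printing Implicit Defensive.
Import Order.TTheory GRing.Theory Num.Theory.
Local Open Scope ring_scope.

(* Agents are 'I_n, items are 'I_m arriving in the order o_0, o_1, ..., o_{m-1}. *)

Section Fair.
Variables (R : realFieldType) (n m : nat).
Implicit Types (v : 'I_n -> 'I_m -> R) (a : {ffun 'I_m -> 'I_n}).

Definition all_goods v := forall (i : 'I_n) (o : 'I_m), 0 <= v i o.
Definition all_chores v := forall (i : 'I_n) (o : 'I_m), v i o <= 0.

Definition two_types v :=
  exists S : pred 'I_m, forall (i : 'I_n) (o o' : 'I_m),
    S o = S o' -> v i o = v i o'.

(* value of agent i for the bundle of agent j in the restriction A^t
   (items o_1..o_t, i.e. indices < t) *)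
Definition bval v a (t : nat) (i j : 'I_n) : R :=
  \sum_(o < m | (o < t)%N && (a o == j)) v i o.

Definition util v a (i : 'I_n) : R := bval v a m i i.

Definition EF1_goods v a (t : nat) :=
  forall i j : 'I_n,
    bval v a t i j <= bval v a t i i \/
    exists g : 'I_m, [/\ (g < t)%N, a g == j &
                         bval v a t i j - v i g <= bval v a t i i].

Definition EF1_chores v a (t : nat) :=
  forall i j : 'I_n,
    bval v a t i j <= bval v a t i i \/
    exists c : 'I_m, [/\ (c < t)%N, a c == i &
                         bval v a t i j <= bval v a t i i - v i c].

Definition TEF1_goods v a := forall t : nat, (t <= m)%N -> EF1_goods v a t.
Definition TEF1_chores v a := forall t : nat, (t <= m)%N -> EF1_chores v a t.

Definition PO v a :=
  ~ exists a' : {ffun 'I_m -> 'I_n},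
      (forall i, util v a i <= util v a' i) /\ exists i, util v a i < util v a' i.

End Fair.

(* Goods: two goods of a type X followed by three of a type Y; agent 0 values
   X at 2 and Y at 1, agent 1 values X at 1 and Y at 2, and the other agents
   value nothing.  Pareto optimality gives every good to agent 0 or 1, and EF1
   after two rounds splits the two X-goods between them.  Agent 0 then cannot
   hold a Y-good, since swapping it for agent 1's X-good helps both; so in the
   end agent 0 owns a single good worth 2 and values agent 1's bundle at 5,
   still more than 2 after removing any one good.

   Chores: n chores of a type Y followed by three of a type X; agent 0 values
   Y at -2 and X at -1, the others Y at -1 and X at -2.  EF1 after n rounds
   hands out the Y-chores one per agent, as an agent with two would envy an
   agent with none.  Pareto optimality puts every X-chore on agent 0, since
   swapping it for agent 0's Y-chore helps both; agent 0 then holds chores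
   worth -5 to it against agent 1's single chore worth -2, and dropping one
   chore worth at least -2 does not close the gap. *)

From mathcomp Require Import all_boot all_order all_algebra.
From mathcomp Require Import lra zify.
Set Implicit Arguments. Unset Strict Implicit. Unset Printing Implicit Defensive.
Import Order.TTheory GRing.Theory Num.Theory.
Local Open Scope ring_scope.

Lemma onto_injF (T : finType) (f : T -> T) : (forall y, y \in codom f) -> injective f.
Proof.
move=> onto_f; have /image_injP f_inj : #|codom f| == #|T|.
  by rewrite (@eq_card _ _ T) // => y; rewrite onto_f inE.
by move=> x y; apply: f_inj.
Qed.

Section SumBounds.
Variables (R : numDomainType) (I : finType).
Implicit Types (s : seq I) (P : pred I) (F : I -> R).

Lemma sum_seq_le_pred s P F : uniq s -> all P s -> (forall i, P i -> 0 <= F i) ->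
  \sum_(i <- s) F i <= \sum_(i | P i) F i.
Proof.
move=> s_uniq /allP sP F_ge0.
rewrite (big_uniq _ s_uniq) [X in _ <= X](bigID (mem s)) /=.
have -> : \sum_(i | P i && (i \in s)) F i = \sum_(i in s) F i.
  by apply: eq_bigl => i; case: (boolP (i \in s)) => [/sP ->|]; rewrite ?andbF.
by rewrite lerDl sumr_ge0 // => i /andP[/F_ge0].
Qed.

Lemma sum_pred_le_seq s P F : uniq s -> all P s -> (forall i, P i -> F i <= 0) ->
  \sum_(i | P i) F i <= \sum_(i <- s) F i.
Proof.
move=> s_uniq sP F_le0; rewrite -lerN2 -!sumrN.
by apply: sum_seq_le_pred => // i /F_le0; rewrite oppr_ge0.
Qed.

End SumBounds.

Section Allocations.
Variables (R : realFieldType) (n m : nat).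

Lemma two_types_typed (S : pred 'I_m) (w : 'I_n -> bool -> R) :
  two_types (fun i o => w i (S o)).
Proof. by exists S => i o o' ->. Qed.

Variable v : 'I_n -> 'I_m -> R.
Implicit Types (a : {ffun 'I_m -> 'I_n}) (i j : 'I_n) (o x y : 'I_m).

Definition reassign a o j : {ffun 'I_m -> 'I_n} :=
  [ffun x => if x == o then j else a x].

Lemma util_reassign a o j i :
  util v (reassign a o j) i =
  util v a i - (if a o == i then v i o else 0) + (if j == i then v i o else 0).
Proof.
rewrite /util /bval.
under eq_bigl => x do rewrite ltn_ord.
under [in RHS]eq_bigl => x do rewrite ltn_ord.
rewrite big_mkcond [in RHS]big_mkcond (bigD1 o) //= [in RHS](bigD1 o) //=.
rewrite ffunE eqxx (eq_bigr (fun x => if a x == i then v i x else 0)).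
  by rewrite addrC [X in _ = X - _ + _]addrC addrK.
by move=> x /negbTE xo; rewrite ffunE xo.
Qed.

Lemma PO_reassign_le0 a o j : PO v a -> v (a o) o <= 0 -> v j o <= 0.
Proof.
move=> POa ao_le0; rewrite leNgt; apply/negP => j_gt0; apply: POa.
have ajo : a o != j by apply: contraTneq j_gt0 => <-; rewrite -leNgt.
exists (reassign a o j); split; last first.
  by exists j; rewrite util_reassign eqxx (negbTE ajo) subr0 ltrDl.
move=> i; rewrite util_reassign.
by case: eqP => [<-|_]; case: eqP => [<-|_]; lra.
Qed.

Lemma PO_swap_lt a x y : PO v a -> a x != a y ->
  v (a x) x < v (a x) y -> v (a y) x < v (a y) y.
Proof.
move=> POa axy gain_x; rewrite ltNge; apply/negP => no_loss_y; apply: POa.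
have yx : (y == x) = false by apply: contraNF axy => /eqP ->.
have ayx : (a y == a x) = false by rewrite eq_sym (negbTE axy).
exists (reassign (reassign a x (a y)) y (a x)); split; last first.
  exists (a x); rewrite !util_reassign ffunE yx eqxx ayx; lra.
move=> i; rewrite !util_reassign ffunE yx.
case: (eqVneq (a x) i) => [<-|]; first by rewrite ayx; lra.
by case: (eqVneq (a y) i) => [<-|]; lra.
Qed.

Lemma EF1_goods_le a t i j (c : R) : EF1_goods v a t -> 0 <= c ->
    (forall g : 'I_m, (g < t)%N -> a g = j -> v i g <= c) ->
  bval v a t i j <= bval v a t i i + c.
Proof.
move=> EF1a c_ge0 c_max.
have [envy_free | [g [gt /eqP agj ef1_g]]] := EF1a i j; first lra.
by have := c_max g gt agj; lra.
Qed.

Lemma EF1_chores_le a t i j (c : R) : EF1_chores v a t -> c <= 0 ->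
    (forall o, (o < t)%N -> a o = i -> c <= v i o) ->
  bval v a t i j <= bval v a t i i - c.
Proof.
move=> EF1a c_le0 c_min.
have [envy_free | [o [ot /eqP aoi ef1_o]]] := EF1a i j; first lra.
by have := c_min o ot aoi; lra.
Qed.

End Allocations.

Section Goods.
Variables (R : realFieldType) (n : nat).

Definition goods_val (i : 'I_n) (X : bool) : R :=
  if val i == 0%N then (if X then 2 else 1)
  else if val i == 1%N then (if X then 1 else 2) else 0.

Definition goods_instance : 'I_n -> 'I_5 -> R := fun i o => goods_val i (o < 2)%N.

Lemma goods_instance_ge0 i o : 0 <= goods_instance i o.
Proof. by rewrite /goods_instance /goods_val; repeat case: ifP => _; lra. Qed.

Lemma goods_instance_le2 i o : goods_instance i o <= 2.
Proof. by rewrite /goods_instance /goods_val; repeat case: ifP => _; lra. Qed.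

Variables (n_ge2 : (2 <= n)%N) (a : {ffun 'I_5 -> 'I_n}).
Hypotheses (TEF1a : TEF1_goods goods_instance a) (POa : PO goods_instance a).

Let i0 : 'I_n := Ordinal (ltnW n_ge2).
Let i1 : 'I_n := Ordinal n_ge2.
Let x0 : 'I_5 := @Ordinal 5 0 isT.
Let x1 : 'I_5 := @Ordinal 5 1 isT.

Lemma goods_held_by_i0_or_i1 (o : 'I_5) : a o = i0 \/ a o = i1.
Proof.
case ao: (val (a o)) => [|[|k]]; [left | right | exfalso]; try exact: val_inj.
have := PO_reassign_le0 (o := o) i1 POa.
by rewrite /goods_instance /goods_val ao /=; case: (o < 2)%N => /(_ (lexx 0)); lra.
Qed.

Lemma goods_X_split : a x0 != a x1.
Proof.
apply/eqP => a01.
suff no_envy i : i != a x0 -> (val i <= 1)%N -> False.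
  by case: (goods_held_by_i0_or_i1 x0) => ax0;
    [apply: (no_envy i1) | apply: (no_envy i0)]; rewrite ?ax0.
move=> i_out i_le1.
have c_gt0 : 0 < goods_instance i x0.
  rewrite /goods_instance /goods_val.
  by case: i {i_out} i_le1 => [[|[|]] ?] //= _; lra.
have own : bval goods_instance a 2 i i = 0.
  rewrite /bval big1 // => o /andP[o_lt2 /eqP aoi].
  have : (o == x0) || (o == x1) by case: o o_lt2 {aoi} => [[|[|]]].
  by case/orP=> /eqP oE; case/negP: i_out; rewrite -aoi oE -?a01.
have envied : 2 * goods_instance i x0 <= bval goods_instance a 2 i (a x0).
  have := @sum_seq_le_pred _ _ [:: x0; x1] (fun o => (o < 2)%N && (a o == a x0))
            (goods_instance i) isT.
  rewrite /= -a01 eqxx => /(_ isT (fun o _ => goods_instance_ge0 i o)).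
  by rewrite !big_cons big_nil; apply: le_trans; rewrite /goods_instance /=; lra.
have c_max (g : 'I_5) :
    (g < 2)%N -> a g = a x0 -> goods_instance i g <= goods_instance i x0.
  by move=> g_lt2 _; rewrite /goods_instance g_lt2.
by have := EF1_goods_le (@TEF1a 2%N isT) (ltW c_gt0) c_max; rewrite own; lra.
Qed.

Lemma goods_X_held_by_i0_and_i1 :
  exists xa xb : 'I_5, [/\ (xa < 2)%N, (xb < 2)%N, a xa = i1 & a xb = i0].
Proof.
have := goods_X_split.
case: (goods_held_by_i0_or_i1 x0) (goods_held_by_i0_or_i1 x1) => [] a0 [] a1;
  rewrite a0 a1 ?eqxx // => _.
- by exists x1, x0.
- by exists x0, x1.
Qed.

Lemma goods_Y_held_by_i1 (y : 'I_5) : ~~ (y < 2)%N -> a y = i1.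
Proof.
move=> y_Y; have [xa [_ [xa_X _ axa _]]] := goods_X_held_by_i0_and_i1.
case: (goods_held_by_i0_or_i1 y) => [ay|//].
have := PO_swap_lt (x := xa) (y := y) POa; rewrite axa ay.
by rewrite /goods_instance /goods_val /= xa_X (negbTE y_Y) ltr1n ltrn1 => /(_ isT isT).
Qed.

Lemma goods_final_bval_i1 : 5 <= bval goods_instance a 5 i0 i1.
Proof.
have [xa [_ [xa_X _ axa _]]] := goods_X_held_by_i0_and_i1.
pose s : seq 'I_5 := [:: xa; @Ordinal 5 2 isT; @Ordinal 5 3 isT; @Ordinal 5 4 isT].
have s_uniq : uniq s by rewrite /= !inE -!(inj_eq val_inj) /=; lia.
have := @sum_seq_le_pred _ _ s (fun o => (o < 5)%N && (a o == i1))
          (goods_instance i0) s_uniq.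
rewrite /= axa !goods_Y_held_by_i1 // eqxx ltn_ord.
move=> /(_ isT (fun o _ => goods_instance_ge0 i0 o)); apply: le_trans.
by rewrite !big_cons big_nil /goods_instance /goods_val /= xa_X; lra.
Qed.

Lemma goods_final_bval_i0 : bval goods_instance a 5 i0 i0 = 2.
Proof.
have [xa [xb [xa_X xb_X axa axb]]] := goods_X_held_by_i0_and_i1.
rewrite /bval (big_pred1 xb) => [|o]; first by rewrite /goods_instance /= xb_X.
rewrite ltn_ord /=; apply/eqP/eqP => [ao | ->//].
have o_X : (o < 2)%N by apply: contraTT isT => /goods_Y_held_by_i1; rewrite ao.
have o_xa : o != xa by apply: contraTneq isT => oE; move: ao; rewrite oE axa.
have xab : xa != xb by apply: contraTneq isT => abE; move: axa; rewrite abE axb.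
by apply: val_inj; move: o_xa xab; rewrite -!(inj_eq val_inj) /=; lia.
Qed.

Lemma goods_instance_no_TEF1_PO : False.
Proof.
have EF1_final := EF1_goods_le (@TEF1a 5%N isT) (j := i1) (c := 2) (ler0n _ 2)
  (fun g _ _ => goods_instance_le2 i0 g).
have := le_trans goods_final_bval_i1 EF1_final.
by rewrite goods_final_bval_i0 -natrD ler_nat.
Qed.

End Goods.

Section Chores.
Variables (R : realFieldType) (n : nat).

Definition chores_val (i : 'I_n) (Y : bool) : R :=
  if val i == 0%N then (if Y then -2 else -1) else (if Y then -1 else -2).

Definition chores_instance : 'I_n -> 'I_n.+3 -> R :=
  fun i o => chores_val i (o < n)%N.

Lemma chores_instance_le0 i o : chores_instance i o <= 0.
Proof. by rewrite /chores_instance /chores_val; repeat case: ifP => _; lra. Qed.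

Lemma chores_instance_ge_2 i o : -2 <= chores_instance i o.
Proof. by rewrite /chores_instance /chores_val; repeat case: ifP => _; lra. Qed.

Variables (n_ge2 : (2 <= n)%N) (a : {ffun 'I_n.+3 -> 'I_n}).
Hypotheses (TEF1a : TEF1_chores chores_instance a) (POa : PO chores_instance a).

Let c0 : 'I_n := Ordinal (ltnW n_ge2).
Let c1 : 'I_n := Ordinal n_ge2.
Let n_le_n3 : (n <= n.+3)%N. Proof. by rewrite !leqW. Qed.
Let Y_item (k : 'I_n) : 'I_n.+3 := widen_ord n_le_n3 k.
Let Y_holder (k : 'I_n) : 'I_n := a (Y_item k).

Lemma chores_Y_holder_onto p : p \in codom Y_holder.
Proof.
apply/contraT => p_out.
have /injectivePn [k1 [k2 k12 same_holder]] : ~~ injectiveb Y_holder.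
  by apply: contra p_out => /injectiveP/injF_onto.
set i := Y_holder k1.
have c_le : chores_val i true <= -1 by rewrite /chores_val; case: ifP => _; lra.
have c_le0 : chores_val i true <= 0 by lra.
have envied : bval chores_instance a n i p = 0.
  rewrite /bval big1 // => o /andP[o_Y /eqP aop]; case/negP: p_out.
  apply/codomP; exists (Ordinal o_Y).
  by rewrite -aop /Y_holder; congr (a _); apply: val_inj.
have own : bval chores_instance a n i i <= 2 * chores_val i true.
  have s_uniq : uniq [:: Y_item k1; Y_item k2].
    by rewrite /= inE -(inj_eq val_inj) /= (inj_eq val_inj) k12.
  have := @sum_pred_le_seq _ _ _ (fun o : 'I_n.+3 => (o < n)%N && (a o == i))
            (chores_instance i) s_uniq.
  rewrite /= !ltn_ord -[a (Y_item k2)]/(Y_holder k2) -same_holder eqxx.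
  move=> /(_ isT (fun o _ => chores_instance_le0 i o)) /le_trans; apply.
  by rewrite !big_cons big_nil /chores_instance /= !ltn_ord; lra.
have c_min (o : 'I_n.+3) :
    (o < n)%N -> a o = i -> chores_val i true <= chores_instance i o.
  by move=> o_Y _; rewrite /chores_instance o_Y.
have := EF1_chores_le p (@TEF1a n n_le_n3) c_le0 c_min.
by rewrite envied; lra.
Qed.

Lemma chores_Y_holder_inj : injective Y_holder.
Proof. exact: onto_injF chores_Y_holder_onto. Qed.

Lemma chores_X_held_by_c0 (x : 'I_n.+3) : ~~ (x < n)%N -> a x = c0.
Proof.
move=> x_X; have /codomP [k c0k] := chores_Y_holder_onto c0.
case: (eqVneq (a x) c0) => // axc0; exfalso.
have := PO_swap_lt (x := Y_item k) (y := x) POa.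
rewrite -[a (Y_item k)]/(Y_holder k) -c0k eq_sym axc0.
have ax_not0 : (val (a x) == 0%N) = false.
  by apply: contraNF axc0 => /eqP ax0; apply/eqP/val_inj.
rewrite /chores_instance /chores_val /= ltn_ord (negbTE x_X) ax_not0.
by move=> /(_ isT); lra.
Qed.

Lemma chores_final_bval_c0 : bval chores_instance a n.+3 c0 c0 <= -5.
Proof.
have /codomP [k0 c0k] := chores_Y_holder_onto c0.
have X_item k : (n <= k <= n.+2)%N ->
    a (inord k) = c0 /\ chores_instance c0 (inord k) = -1.
  move=> /andP[n_le_k k_le]; have k_X : ~~ (@inord n.+2 k < n)%N.
    by rewrite inordK // -leqNgt.
  by rewrite chores_X_held_by_c0 // /chores_instance (negbTE k_X).
have [[[a0 v0] [a1 v1]] [a2 v2]] :=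
  (X_item n ltac:(lia), X_item n.+1 ltac:(lia), X_item n.+2 ltac:(lia)).
pose s : seq 'I_n.+3 := [:: Y_item k0; inord n; inord n.+1; inord n.+2].
have s_val : map (@nat_of_ord _) s = [:: val k0; n; n.+1; n.+2].
  by rewrite /= !inordK //; lia.
have s_uniq : uniq s.
  by rewrite -(map_inj_uniq (@ord_inj _)) s_val /= !inE; have := ltn_ord k0; lia.
have := @sum_pred_le_seq _ _ s (fun o => (o < n.+3)%N && (a o == c0))
          (chores_instance c0) s_uniq.
rewrite /= (leq_trans (ltn_ord k0)) // !ltn_ord.
rewrite -[a (Y_item k0)]/(Y_holder k0) -c0k a0 a1 a2 eqxx.
move=> /(_ isT (fun o _ => chores_instance_le0 c0 o)) /le_trans; apply.
by rewrite !big_cons big_nil v0 v1 v2 /chores_instance /= ltn_ord /chores_val /=; lra.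
Qed.

Lemma chores_final_bval_c1 : bval chores_instance a n.+3 c0 c1 = -2.
Proof.
have /codomP [k1 c1k] := chores_Y_holder_onto c1.
rewrite /bval (big_pred1 (Y_item k1)) => [|o].
  by rewrite /chores_instance /= ltn_ord /chores_val.
rewrite ltn_ord /=; apply/eqP/eqP => [ao | ->]; last by rewrite c1k.
case: (ltnP o n) => [o_Y | o_X].
  have : Y_holder (Ordinal o_Y) = Y_holder k1.
    by rewrite -c1k -ao /Y_holder; congr (a _); apply: val_inj.
  by move/chores_Y_holder_inj => <-; apply: val_inj.
by move: ao; rewrite chores_X_held_by_c0 -?leqNgt // => /(congr1 val).
Qed.

Lemma chores_instance_no_TEF1_PO : False.
Proof.
have := EF1_chores_le c1 (@TEF1a n.+3 (leqnn _)) (c := -2) ltac:(lra)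
  (fun o _ _ => chores_instance_ge_2 c0 o).
by rewrite chores_final_bval_c1; have := chores_final_bval_c0; lra.
Qed.

End Chores.

Unset Implicit Arguments.

Theorem proposition2 (R : realFieldType) (n : nat) : (2 <= n)%N ->
  (exists (m : nat) (v : 'I_n -> 'I_m -> R),
      [/\ all_goods v, two_types v &
          forall a : {ffun 'I_m -> 'I_n}, ~ (TEF1_goods v a /\ PO v a)]) /\
  (exists (m : nat) (v : 'I_n -> 'I_m -> R),
      [/\ all_chores v, two_types v &
          forall a : {ffun 'I_m -> 'I_n}, ~ (TEF1_chores v a /\ PO v a)]).
Proof.
move=> n_ge2; split.
  exists 5%N, (@goods_instance R n); split.
  - exact: goods_instance_ge0.
  - exact: two_types_typed.
  - by move=> a [TEF1a POa]; exact: goods_instance_no_TEF1_PO n_ge2 a TEF1a POa.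
exists n.+3, (@chores_instance R n); split.
- exact: chores_instance_le0.
- exact: two_types_typed.
- by move=> a [TEF1a POa]; exact: chores_instance_no_TEF1_PO n_ge2 a TEF1a POa.
Qed.
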